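(* Let $F$ be a graph with $\gamma(F)=1$ and $k = |E(F)| \geq 3$. Let $G$ be either a pure $(m,F)$-special graph or a copy of $F+e$ for some $e \in E(\overline{F})$. Then: (a) for every $x \in V(G)$, $G$ has a minimum $F$-isolating set $D$ with $x \in D$; (b) if $G$ is a pure $(m,F)$-special graph and $x \in V(G)$ is such that $x$ is not a vertex of the quotient graph in any representation of $G$ as a pure $(m,F)$-special graph, then $\iota(G-x,F) = \iota(G,F) - 1$.
   Context: All graphs are finite and simple. For $D \subseteq V(G)$, $N_G[D]$ is the closed neighbourhood of $D$; $G-x$ is $G$ with vertex $x$ deleted. A set $D \subseteq V(G)$ is an $F$-isolating set of $G$ if $G - N_G[D]$ contains no subgraph isomorphic to $F$; $\iota(G,F)$ is the minimum size of such a set, and a minimum $F$-isolating set is one of this size. $\gamma(F)=1$ means $F$ has a vertex adjacent to all other vertices of $F$. $\overline{F}$ is the complement of $F$ and $F+e = (V(F),E(F)\cup\{e\})$. A pure $(m,F)$-special graph is a graph obtained as follows: $m+1 = q(k+2)$ for an integer $q\ge 1$; take a tree $T$ with $q$ vertices $v_1,\dots,v_q$, pairwise disjoint copies $F_1,\dots,F_q$ of $F$ disjoint from $V(T)$, and vertices $w_i\in V(F_i)$; the graph has vertex set $V(T)\cup\bigcup_i V(F_i)$ and edge set $E(T)\cup\bigcup_i (E(F_i)\cup\{v_iw_i\})$. A choice of such $T, F_i, w_i$ is a representation of the graph; $T$ is its quotient graph, the subgraph $G_i$ with vertex set $\{v_i\}\cup V(F_i)$ and edge set $E(F_i)\cup\{v_iw_i\}$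 is an $F$-constituent, and $v_i$ is its $F$-connection. (For such a graph, $\iota(G,F) = q$.) *)

From mathcomp Require Import all_boot.
Set Implicit Arguments. Unset Strict Implicit. Unset Printing Implicit Defensive.

Record sgraph := SGraph {
  vert :> finType;
  adj : rel vert;
  adj_sym : symmetric adj;
  adj_irr : irreflexive adj }.

Arguments adj {s}.

Definition edges (G : sgraph) : {set {set G}} :=
  [set e : {set G} | [exists u : G, exists v : G, adj u v && (e == [set u; v])]].

Definition cnbhd (G : sgraph) (D : {set G}) : {set G} :=
  D :|: [set v : G | [exists u in D, adj u v]].

Section Induced.
Variables (G : sgraph) (S : {set G}).
Definition ind_type : finType := {y : G | y \in S}.
Definition ind_adj : rel ind_type := fun a b => adj (val a) (val b).
Lemma ind_adj_sym : symmetric ind_adj.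
Proof. by move=> a b; rewrite /ind_adj adj_sym. Qed.
Lemma ind_adj_irr : irreflexive ind_adj.
Proof. by move=> a; rewrite /ind_adj adj_irr. Qed.
Definition induced : sgraph := SGraph ind_adj_sym ind_adj_irr.
End Induced.

Definition minus_cnbhd (G : sgraph) (D : {set G}) : sgraph := induced (~: cnbhd D).
Definition delete (G : sgraph) (x : G) : sgraph := induced [set~ x].

Definition has_copy (F H : sgraph) : bool :=
  [exists f : {ffun F -> H},
     injectiveb f && [forall u : F, forall v : F, adj u v ==> adj (f u) (f v)]].

Definition isolating (F G : sgraph) (D : {set G}) : bool :=
  ~~ has_copy F (minus_cnbhd D).

Definition iotaF (F G : sgraph) : nat :=
  \big[minn/#|G|]_(D : {set G} | isolating F D) #|D|.

Definition min_isolating (F G : sgraph) (D : {set G}) : Prop :=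
  isolating F D /\ #|D| = iotaF F G.

Definition graph_iso (G H : sgraph) (f : G -> H) : Prop :=
  bijective f /\ forall u v : G, adj (f u) (f v) = adj u v.

Definition isomorphic (G H : sgraph) : Prop := exists f : G -> H, graph_iso f.

(* Trees: connected and acyclic. A cycle is a duplicate-free cyclic sequence
   of at least 3 vertices, consecutive ones adjacent. *)
Definition is_tree (T : sgraph) : Prop :=
  (forall u v : T, connect adj u v) /\
  ~ (exists c : seq T, (2 < size c) && ucycleb adj c).

Section PlusEdge.
Variables (F : sgraph) (a b : F).
Definition pe_adj : rel F := fun u v =>
  adj u v || ((u != v) && (((u == a) && (v == b)) || ((u == b) && (v == a)))).
Lemma pe_adj_sym : symmetric pe_adj.
Proof.
move=> u v; rewrite /pe_adj adj_sym [v == u]eq_sym.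
by case: (u == a) (v == a) (u == b) (v == b) => [] [] [] [].
Qed.
Lemma pe_adj_irr : irreflexive pe_adj.
Proof. by move=> u; rewrite /pe_adj adj_irr eqxx. Qed.
Definition plus_edge : sgraph := SGraph pe_adj_sym pe_adj_irr.
End PlusEdge.

(* The pure special graph built from a tree T (quotient graph, vertices v_i),
   copies F_i = {i} x V(F) of F, and attachment vertices w i in F_i:
   vertex set V(T) + V(T) x V(F). *)
Section Special.
Variables (T F : sgraph) (w : T -> F).
Definition sp_type : finType := (T + (T * F))%type.
Definition sp_adj : rel sp_type := fun a b =>
  match a, b with
  | inl i, inl j => adj i j
  | inr (i, u), inr (j, v) => (i == j) && adj u v
  | inl i, inr (j, v) => (i == j) && (v == w i)
  | inr (j, v), inl i => (i == j) && (v == w i)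
  end.
Lemma sp_adj_sym : symmetric sp_adj.
Proof.
move=> [i|[i u]] [j|[j v]] //=; first exact: adj_sym.
by rewrite eq_sym adj_sym.
Qed.
Lemma sp_adj_irr : irreflexive sp_adj.
Proof. by move=> [i|[i u]] /=; rewrite adj_irr ?andbF. Qed.
Definition special_graph : sgraph := SGraph sp_adj_sym sp_adj_irr.
End Special.

(* A representation of G as a pure (m,F)-special graph: a tree T with
   q = #|T| vertices, m+1 = q(k+2) with k = |E(F)|, attachment vertices w,
   and an isomorphism phi identifying the construction with G
   (so phi (inl i) are the vertices of the quotient graph, i.e. the
   F-connections, in this representation). *)
Definition pure_rep (m : nat) (F G : sgraph) (T : sgraph) (w : T -> F)
    (phi : special_graph w -> G) : Prop :=
  is_tree T /\ m.+1 = #|T| * (#|edges F| + 2) /\ graph_iso phi.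
Arguments pure_rep : clear implicits.

Definition pure_special (m : nat) (F G : sgraph) : Prop :=
  exists (T : sgraph) (w : T -> F) (phi : special_graph w -> G), pure_rep m F G T w phi.

Definition gamma_one (F : sgraph) : Prop :=
  exists c : F, forall v : F, v != c -> adj c v.

(* Each block {v_i} + F_i contains a copy of F whose closed neighbourhood stays
   inside the block, so every F-isolating set meets every block and iota = q.
   Conversely, any vertex y together with the connections of the other blocks
   is F-isolating: since F has a dominating vertex, a copy of F needs a vertex
   seeing #|F| - 1 others outside N[D], and every block has two vertices in
   N[D].  The same argument gives iota(G - x) = q - 1 when q >= 2.  When q = 1,
   G - x is (F - x) plus a pendant vertex at w; counting arcs shows that a copy
   of F there forces x to be pendant in F and the copy to be an isomorphism,
   which exhibits x as the connection of another representation.  For F + e,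
   a single vertex is isolating since only #|F| - 1 vertices remain. *)

From mathcomp Require Import all_boot zify.
Set Implicit Arguments. Unset Strict Implicit. Unset Printing Implicit Defensive.

Definition embedding (F G : sgraph) (f : F -> G) : Prop :=
  injective f /\ forall u v, adj u v -> adj (f u) (f v).

Lemma graph_iso_comp (G H K : sgraph) (f : G -> H) (g : H -> K) :
  graph_iso f -> graph_iso g -> graph_iso (g \o f).
Proof.
by move=> [fbij fadj] [gbij gadj]; split=> [|u v /=]; [exact: bij_comp | rewrite gadj fadj].
Qed.

Lemma graph_iso_can (G H : sgraph) (f : G -> H) (g : H -> G) :
  graph_iso f -> cancel f g -> cancel g f -> graph_iso g.
Proof.
move=> [_ fadj] fK gK; split=> [|u v]; first exact: Bijective gK fK.
by rewrite -fadj !gK.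
Qed.

Lemma mem_cnbhd (G : sgraph) (D : {set G}) z : z \in D -> z \in cnbhd D.
Proof. by rewrite inE => ->. Qed.

Lemma adj_mem_cnbhd (G : sgraph) (D : {set G}) d z :
  d \in D -> adj d z -> z \in cnbhd D.
Proof. by move=> hd hdz; rewrite !inE; apply/orP; right; apply/exists_inP; exists d. Qed.

Lemma cnbhd0 (G : sgraph) : cnbhd (set0 : {set G}) = set0.
Proof. by apply/setP => z; rewrite !inE; apply/exists_inP => -[d]; rewrite inE. Qed.

Lemma cnbhd_imset (G H : sgraph) (f : G -> H) (D : {set G}) z :
  injective f -> (forall a b, adj (f a) (f b) = adj a b) ->
  (f z \in cnbhd (f @: D)) = (z \in cnbhd D).
Proof.
move=> finj fadj; rewrite !inE (mem_imset _ _ finj); congr orb.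
apply/exists_inP/exists_inP => [[_ /imsetP [d hd ->]] | [d hd hdz]].
  by rewrite fadj; exists d.
by exists (f d); rewrite ?fadj // imset_f.
Qed.

Lemma connected_exists_adj (T : sgraph) :
  (forall i j : T, connect adj i j) -> 1 < #|T| -> forall i : T, exists j, adj i j.
Proof.
move=> Tconn hT i; have /card_gt0P [j] : 0 < #|[set~ i]| by rewrite cardsC1; lia.
rewrite in_setC1 => hji; case/connectP: (Tconn i j) => -[_ /= hj | k p /= /andP [hik _] _].
  by rewrite hj eqxx in hji.
by exists k.
Qed.

Section Copies.
Variable F : sgraph.

Lemma has_copy_inducedP (G : sgraph) (A : {set G}) :
  reflect (exists2 f : F -> G, embedding f & forall u, f u \in A)
          (has_copy F (induced A)).
Proof.
apply: (iffP existsP) => [[f /andP [/injectiveP finj /forallP fhom]] | [f [finj fhom] fA]].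
  exists (fun u => val (f u)); last by move=> u; exact: valP.
  split=> [u v /val_inj /finj // | u v huv].
  exact: (implyP (forallP (fhom u) v) huv).
exists [ffun u => (exist _ (f u) (fA u) : induced A)]; apply/andP; split.
  by apply/injectiveP => u v; rewrite !ffunE => /(congr1 val); exact: finj.
by apply/forallP => u; apply/forallP => v; apply/implyP => huv; rewrite !ffunE; exact: fhom.
Qed.

Lemma card_le_embedding (G : sgraph) (f : F -> G) (B : {set G}) :
  injective f -> (forall u, f u \in B) -> #|F| <= #|B|.
Proof.
move=> finj fB; rewrite -cardsT -(card_imset _ finj); apply: subset_leq_card.
by apply/subsetP => _ /imsetP [u _ ->].
Qed.

Lemma copy_free_of_card (G : sgraph) (A : {set G}) :
  #|A| < #|F| -> ~~ has_copy F (induced A).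
Proof.
rewrite ltnNge; apply: contra => /has_copy_inducedP [f [finj _] fA].
exact: card_le_embedding finj fA.
Qed.

Section Dominating.
Variable c : F.
Hypothesis hc : forall v, v != c -> adj c v.

Lemma exists_adj (u : F) : 1 < #|F| -> exists a, adj u a.
Proof.
move=> hF; case: (eqVneq u c) => [-> | huc]; last by exists c; rewrite adj_sym hc.
have /card_gt0P [v] : 0 < #|[set~ c]| by rewrite cardsC1; lia.
by rewrite in_setC1 => hv; exists v; exact: hc.
Qed.

(* The image of the dominating vertex [c] sees the whole copy. *)
Lemma copy_free_of_sparse (G : sgraph) (A : {set G}) :
  (forall y, y \in A -> #|[set z in A | (z == y) || adj y z]| < #|F|) ->
  ~~ has_copy F (induced A).
Proof.
move=> hsparse; apply/has_copy_inducedP => -[f [finj fhom] fA].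
have := hsparse _ (fA c); rewrite ltnNge => /negP; apply.
apply: card_le_embedding finj _ => u; rewrite inE fA /=.
by case: (eqVneq u c) => [-> | huc]; rewrite ?eqxx // fhom ?orbT ?hc.
Qed.

End Dominating.

Lemma iotaF_le_card (G : sgraph) (D : {set G}) : isolating F D -> iotaF F G <= #|D|.
Proof.
move=> hD; rewrite /iotaF; have : D \in index_enum {set G} := mem_index_enum D.
elim: (index_enum _) => [//|D' s IH]; rewrite inE big_cons => /orP [/eqP <-|hs].
  by rewrite hD geq_minl.
by case: ifP => _; rewrite ?geq_min IH ?orbT.
Qed.

Lemma iotaF_le_order (G : sgraph) : iotaF F G <= #|G|.
Proof.
by apply: (big_ind (fun n => n <= #|G|)) => // [m n hm _ | D _]; rewrite ?geq_min ?hm ?max_card.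
Qed.

Lemma iotaF_ge (G : sgraph) (n : nat) :
  n <= #|G| -> (forall D : {set G}, isolating F D -> n <= #|D|) -> n <= iotaF F G.
Proof.
by move=> hG hD; apply: (big_ind (fun m => n <= m)) => // a b ha hb; rewrite leq_min ha hb.
Qed.

Lemma iotaF_eq_card (G : sgraph) (D : {set G}) :
  isolating F D -> (forall D' : {set G}, isolating F D' -> #|D| <= #|D'|) ->
  iotaF F G = #|D|.
Proof.
by move=> hD hmin; apply/eqP; rewrite eqn_leq iotaF_le_card // iotaF_ge ?max_card.
Qed.

Lemma isolating_imset (G H : sgraph) (f : G -> H) (D : {set G}) :
  graph_iso f -> isolating F D -> isolating F (f @: D).
Proof.
move=> [[g fK gK] fadj]; apply: contra => /has_copy_inducedP [e [einj ehom] eA].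
apply/has_copy_inducedP; exists (g \o e).
  by split=> [u v /= /(can_inj gK) /einj // | u v huv /=]; rewrite -fadj !gK ehom.
move=> u; move: (eA u); rewrite !in_setC -{1}(gK (e u)).
by rewrite (cnbhd_imset _ _ (can_inj fK) fadj).
Qed.

Lemma iotaF_iso (G H : sgraph) (f : G -> H) : graph_iso f -> iotaF F G = iotaF F H.
Proof.
have iotaF_le (G' H' : sgraph) (f' : G' -> H') :
    graph_iso f' -> iotaF F H' <= iotaF F G'.
  move=> isof; apply: iotaF_ge => [|D hD]; first by rewrite (bij_eq_card isof.1) iotaF_le_order.
  by rewrite -(card_imset D (bij_inj isof.1)) iotaF_le_card // isolating_imset.
move=> isof; have [g fK gK] := isof.1.
by apply/eqP; rewrite eqn_leq (iotaF_le _ _ _ isof) (iotaF_le _ _ _ (graph_iso_can isof fK gK)).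
Qed.

Lemma min_isolating_imset (G H : sgraph) (f : G -> H) (D : {set G}) :
  graph_iso f -> min_isolating F D -> min_isolating F (f @: D).
Proof.
move=> isof [hD cD]; split; first exact: isolating_imset.
by rewrite (card_imset _ (bij_inj isof.1)) cD (iotaF_iso isof).
Qed.

Lemma isolating_delete (G : sgraph) (x : G) (D : {set delete x}) :
  isolating F D = ~~ has_copy F (induced (~: (x |: cnbhd (val @: D)))).
Proof.
have valinj : injective (val : delete x -> G) := val_inj.
have valadj (a b : delete x) : adj (val a) (val b) = adj a b by [].
congr negb; apply/has_copy_inducedP/has_copy_inducedP => -[f [finj fhom] fA].
  exists (val \o f); first by split=> [u v /val_inj /finj | u v /fhom].
  move=> u; move: (fA u); rewrite !in_setC in_setU1 negb_or /=.
  by rewrite -(cnbhd_imset _ _ valinj valadj) => ->; have := valP (f u); rewrite in_setC1 => ->.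
have fx u : f u \in [set~ x].
  by move: (fA u); rewrite in_setC1 in_setC in_setU1 negb_or => /andP [].
exists (fun u => exist _ (f u) (fx u) : delete x).
  by split=> [u v /(congr1 val) /finj | u v /fhom].
move=> u; move: (fA u); rewrite !in_setC in_setU1 negb_or => /andP [_].
by rewrite -(cnbhd_imset _ _ valinj valadj).
Qed.

Lemma iotaF_delete_iso (G H : sgraph) (f : G -> H) (x : G) :
  graph_iso f -> iotaF F (delete x) = iotaF F (delete (f x)).
Proof.
move=> [fbij fadj]; have finj := bij_inj fbij.
have fx (z : delete x) : f (val z) \in [set~ f x].
  by rewrite in_setC1 (inj_eq finj) -in_setC1; exact: valP.
pose df (z : delete x) : delete (f x) := exist _ (f (val z)) (fx z).
apply: (@iotaF_iso _ _ df); split=> [|a b]; last exact: fadj.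
apply: inj_card_bij => [a b /(congr1 val) /finj /val_inj //|].
have cardC1 (K : sgraph) (y : K) : #|[pred z in [set~ y]]| = #|K|.-1 by rewrite -(cardsC1 y).
by rewrite !card_sig !cardC1 (bij_eq_card fbij).
Qed.

End Copies.

Lemma card_edges_le (F : sgraph) : #|edges F| <= 'C(#|F|, 2).
Proof.
rewrite -card_draws; apply: subset_leq_card; apply/subsetP => e.
rewrite !inE => /existsP [u /existsP [v /andP [huv /eqP ->]]].
by rewrite cards2; case: (eqVneq u v) huv => [->|]; rewrite ?adj_irr.
Qed.

Section Arcs.
Variable G : sgraph.

Definition arcs := [set p : G * G | adj p.1 p.2].
Definition nbhd (x : G) : {set G} := [set y | adj x y].
Definition arcs_off (x : G) := [set p in arcs | (p.1 != x) && (p.2 != x)].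

Lemma card_arcs_off (x : G) : #|arcs_off x| + 2 * #|nbhd x| <= #|arcs|.
Proof.
pose L := [set (x, y) | y in nbhd x]; pose R := [set (y, x) | y in nbhd x].
have cL : #|L| = #|nbhd x| by rewrite card_imset // => y y' [].
have cR : #|R| = #|nbhd x| by rewrite card_imset // => y y' [].
have LR : L :&: R = set0.
  apply/setP => p; rewrite !inE; apply/andP => -[/imsetP [y hy ->] /imsetP [y' _ [_ hyx]]].
  by move: hy; rewrite inE hyx adj_irr.
have sub : L :|: R \subset arcs :\: arcs_off x.
  apply/subsetP => p /setUP [] /imsetP [y]; rewrite !inE => hy -> /=;
    by rewrite eqxx ?andbF ?hy // adj_sym hy.
have := cardsID (arcs_off x) arcs; rewrite (setIidPr _); last first.
  by apply/subsetP => p; rewrite inE => /andP [].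
have := subset_leq_card sub; rewrite cardsU LR cards0 cL cR subn0 => h <-.
by rewrite leq_add2l mul2n -addnn.
Qed.

(* Only [#|arcs| - 2 * deg x] arcs avoid [x], so two extra arcs can absorb all
   of [arcs] only when [deg x = 1], and then the injection is onto. *)
Lemma pendant_of_arc_injection (x b : G) (h : G -> G) :
  injective h -> 0 < #|nbhd x| ->
  (forall u v, adj u v -> (h u, h v) \in arcs_off x :|: [set (x, b); (b, x)]) ->
  [/\ b != x, #|nbhd x| = 1 &
      [set (h p.1, h p.2) | p in arcs] = arcs_off x :|: [set (x, b); (b, x)]].
Proof.
move=> hinj hx harc; set E := _ :|: _.
have hhinj : injective (fun p : G * G => (h p.1, h p.2)).
  by move=> [? ?] [? ?] [/hinj -> /hinj ->].
have sub : [set (h p.1, h p.2) | p in arcs] \subset E.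
  by apply/subsetP => _ /imsetP [p hp ->]; apply: harc; rewrite inE in hp.
have cE : #|E| <= #|arcs_off x| + #|[set (x, b); (b, x)]|.
  by rewrite /E cardsU leq_subr.
have cimg : #|arcs| <= #|E|.
  by rewrite -(card_imset _ hhinj); exact: subset_leq_card sub.
have coff := card_arcs_off x.
case: (eqVneq b x) => [ebx | hbx].
  have : #|[set (x, b); (b, x)]| = 1 by rewrite ebx setUid cards1.
  lia.
have c2 : #|[set (x, b); (b, x)]| = 2.
  by rewrite cards2 xpair_eqE eq_sym (negbTE hbx).
split=> //; first by lia.
by apply/eqP; rewrite eqEcard sub (card_imset _ hhinj); lia.
Qed.

End Arcs.

Section Special.
Variables (F T : sgraph) (w : T -> F).
Notation S := (special_graph w).

Definition blk (b : S) : T := match b with inl j => j | inr (j, _) => j end.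

Definition block (j : T) : {set S} := [set b | blk b == j].

Lemma card_block j : #|block j| = #|F|.+1.
Proof.
have -> : block j = inl j |: [set inr (j, u) | u : F].
  apply/setP => -[i|[i u]]; rewrite !inE /=.
    by case: imsetP => [[u _ //] | _]; rewrite orbF.
  case: imsetP => [[v _ [-> _]] | hn]; first by rewrite eqxx.
  by apply: negbTE; apply/eqP => eij; apply: hn; exists u; rewrite ?eij.
rewrite cardsU1 card_imset; last by move=> u v [].
by case: imsetP => [[u _ //] | _]; rewrite cardT enumT.
Qed.

Lemma blk_adj_inr j v (b : S) : adj (inr (j, v) : S) b -> blk b = j.
Proof. by case: b => [i|[i u]] /= /andP [/eqP ->]. Qed.

Lemma cnbhd_inr_blk (D : {set S}) j u :
  inr (j, u) \in cnbhd D -> exists2 d, d \in D & blk d = j.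
Proof.
rewrite !inE => /orP [hd | /exists_inP [d hd hdu]]; first by exists (inr (j, u)).
by exists d; rewrite // (@blk_adj_inr j u) // adj_sym.
Qed.

Lemma card_blk_le (D : {set S}) (J : {set T}) :
  (forall j, j \in J -> exists2 d, d \in D & blk d = j) -> #|J| <= #|D|.
Proof.
move=> hJ; apply: leq_trans (leq_imset_card blk D); apply: subset_leq_card.
by apply/subsetP => j /hJ [d hd <-]; exact: imset_f.
Qed.

Lemma block_meets (A : {set S}) j :
  ~~ has_copy F (induced A) -> exists u, inr (j, u) \notin A.
Proof.
move=> hA; apply/existsP; apply: contraR hA => /existsPn hall.
apply/has_copy_inducedP; exists (fun u => inr (j, u)) => [|u]; last by rewrite -[_ \in _]negbK.
by split=> [u v [] | u v huv] //=; rewrite eqxx.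
Qed.

Lemma two_in_block (X : {set S}) j b1 b2 :
  b1 != b2 -> blk b1 = j -> blk b2 = j -> b1 \in X -> b2 \in X ->
  1 < #|block j :&: X|.
Proof.
move=> hb hj1 hj2 hX1 hX2; apply/card_gt1P; exists b1, b2.
by rewrite !in_setI !inE hj1 hj2 eqxx hX1 hX2.
Qed.

Lemma connection_adj_cnbhd (D : {set S}) j :
  inl j \in D -> inr (j, w j) \in cnbhd D.
Proof. by move=> hj; apply: (adj_mem_cnbhd hj); rewrite /= !eqxx. Qed.

Definition connections_but (i : T) : {set S} := [set inl j | j in [set~ i]].

Lemma card_connections_but (y : S) : #|y |: connections_but (blk y)| = #|T|.
Proof.
have yQ : y \notin connections_but (blk y).
  by apply/imsetP => -[j hj ey]; move: hj; rewrite in_setC1 ey eqxx.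
have Tpos : 0 < #|T| by apply/card_gt0P; exists (blk y).
by rewrite cardsU1 yQ card_imset ?cardsC1 ?add1n ?prednK // => ? ? [].
Qed.

Section DominatingVertex.
Variable c : F.
Hypothesis hc : forall v, v != c -> adj c v.
Hypothesis hF3 : 2 < #|F|.

(* Outside [A], a connection keeps at most itself and its attachment vertex,
   and a copy vertex at most the [#|F| - 1] other vertices of its block. *)
Lemma copy_free_special (A : {set S}) :
  (forall j j', adj j j' -> inl j \in A -> inl j' \notin A) ->
  (forall j, 1 < #|block j :\: A|) ->
  ~~ has_copy F (induced A).
Proof.
move=> hconn hblock; apply: (copy_free_of_sparse hc) => -[j|[j v]] hy.
  apply: (@leq_ltn_trans #|[set inl j; inr (j, w j)]|); last first.
    by apply: leq_trans hF3; rewrite cards2; case: (_ != _).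
  apply: subset_leq_card; apply/subsetP => -[i|[i u]]; rewrite !inE /=.
    by case/andP=> hi /orP [-> // | hji]; move: (hconn _ _ hji hy); rewrite hi.
  by case/and3P=> _ /eqP -> /eqP ->; rewrite eqxx.
apply: (@leq_ltn_trans #|block j :&: A|).
  apply: subset_leq_card; apply/subsetP => z; rewrite !inE => /andP [-> hz].
  by rewrite andbT; case/orP: hz => [/eqP -> // | /blk_adj_inr ->].
have := cardsID A (block j); have := hblock j; rewrite card_block; lia.
Qed.

(* [y] takes care of its own block: either [y] is its connection, or [y] and a
   neighbour of [y] in the copy of [F] are both dominated. *)
Lemma isolating_connections_but (y : S) :
  isolating F (y |: connections_but (blk y)).
Proof.
set i := blk y; set D := y |: _.
have inD j : j != i -> inl j \in D.
  by move=> hj; apply/setU1r/imset_f; rewrite in_setC1.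
have pair_in j : inl j \in D -> 1 < #|block j :&: cnbhd D|.
  move=> hj; apply: (@two_in_block _ _ (inl j) (inr (j, w j))) => //.
    exact: mem_cnbhd.
  exact: connection_adj_cnbhd.
apply: copy_free_special => [j j' hjj' | j].
  rewrite !in_setC negbK => hj.
  have eji : j = i by apply/eqP; apply: contraR hj => /inD /mem_cnbhd.
  apply: (@mem_cnbhd _ D); apply: inD; rewrite -eji.
  by apply: contraTneq hjj' => ->; rewrite adj_irr.
rewrite setDE setCK; case: (eqVneq j i) => [-> | hj]; last exact/pair_in/inD.
have yD : y \in D := setU11 _ _.
case ey: y => [i' | [i' u]]; rewrite /i ey /=; first by apply: pair_in; rewrite -ey.
have [a hua] := exists_adj hc u (ltnW hF3).
apply: (@two_in_block _ _ (inr (i', u)) (inr (i', a))) => //.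
- by apply: contraTneq hua => -[->]; rewrite adj_irr.
- by rewrite -ey; apply: (@mem_cnbhd _ D).
- by apply: (adj_mem_cnbhd yD); rewrite ey /= eqxx.
Qed.

Lemma card_isolating_special (D : {set S}) : isolating F D -> #|T| <= #|D|.
Proof.
move=> hD; rewrite -cardsT; apply: card_blk_le => j _.
by have [u] := block_meets j hD; rewrite in_setC negbK; exact: cnbhd_inr_blk.
Qed.

Lemma min_isolating_special (y : S) : min_isolating F (y |: connections_but (blk y)).
Proof.
have hD := isolating_connections_but y; split=> //; apply/esym/iotaF_eq_card => // D'.
by rewrite card_connections_but; exact: card_isolating_special.
Qed.

(* Without [z], the block of [z] is still dominated by its connection, which in
   turn is dominated from a neighbouring block of the tree. *)
Lemma iotaF_special_delete (i : T) (u : F) :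
  (forall j j' : T, connect adj j j') -> 1 < #|T| ->
  iotaF F (delete (inr (i, u) : S)) = #|T|.-1.
Proof.
move=> Tconn hT; set z : S := inr (i, u); set Q := connections_but i.
have zQ : z \notin Q by apply/imsetP => -[].
have Qdom j : inl j \in cnbhd Q.
  case: (eqVneq j i) => [-> | hj]; last by apply: (@mem_cnbhd _ Q); apply/imset_f; rewrite in_setC1.
  have [j' hij'] := connected_exists_adj Tconn hT i.
  apply: (@adj_mem_cnbhd _ Q (inl j')); last by rewrite /= adj_sym.
  by apply: imset_f; rewrite in_setC1; apply: contraTneq hij' => ->; rewrite adj_irr.
have valQ : val @: (val @^-1: Q : {set delete z}) = Q.
  apply/setP => b; apply/imsetP/idP => [[d hd ->] | hb]; first by rewrite inE in hd.
  have hbz : b \in [set~ z] by rewrite in_setC1; apply: contraNneq zQ => <-.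
  by exists (exist _ b hbz); rewrite ?inE.
have cardQ : #|val @^-1: Q : {set delete z}| = #|T|.-1.
  by rewrite -(card_imset _ val_inj) valQ card_imset ?cardsC1 // => ? ? [].
rewrite -cardQ; apply: iotaF_eq_card => [|D hD].
  rewrite isolating_delete valQ; apply: copy_free_special => [j j' _ | j].
    by rewrite in_setC in_setU1 Qdom orbT.
  rewrite setDE setCK; case: (eqVneq j i) => [-> | hj].
    by apply: (@two_in_block _ _ z (inl i)); rewrite // in_setU1 ?eqxx ?Qdom ?orbT.
  have jQ : inl j \in Q by apply: imset_f; rewrite in_setC1.
  apply: (@two_in_block _ _ (inl j) (inr (j, w j))); rewrite // in_setU1 ?Qdom ?orbT //.
  by rewrite connection_adj_cnbhd ?orbT.
rewrite cardQ -(card_imset D val_inj) -(cardsC1 i); apply: card_blk_le => j.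
rewrite isolating_delete in hD; rewrite in_setC1 => hj.
have [v] := block_meets j hD; rewrite in_setC negbK in_setU1.
by case/orP=> [/eqP [eji _] | /cnbhd_inr_blk //]; rewrite eji eqxx in hj.
Qed.

Section Reroot.
Variables (t0 : T) (u0 : F).
Hypothesis Tsingle : forall j : T, j = t0.
Let z : S := inr (t0, u0).

(* Collapsing the connection onto [u0] maps [S - z] bijectively onto [F]. *)
Definition proj (b : S) : F := if b is inr (_, u) then u else u0.

Lemma proj_inj_off : {in [set~ z] &, injective proj}.
Proof.
move=> [i|[i u]] [j|[j v]]; rewrite !in_setC1 /= => hb1 hb2.
- by rewrite (Tsingle i) (Tsingle j).
- by move=> ev; move: hb2; rewrite -ev (Tsingle j) eqxx.
- by move=> eu; move: hb1; rewrite eu (Tsingle i) eqxx.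
- by move=> ->; rewrite (Tsingle i) (Tsingle j).
Qed.

Lemma proj_arc (b1 b2 : S) : b1 != z -> b2 != z -> adj b1 b2 ->
  (proj b1, proj b2) \in arcs_off u0 :|: [set (u0, w t0); (w t0, u0)].
Proof.
case: b1 b2 => [i|[i u]] [j|[j v]] /= hb1 hb2.
- by rewrite (Tsingle i) (Tsingle j) adj_irr.
- by case/andP=> _ /eqP ->; rewrite (Tsingle i) in_setU in_set2 eqxx orbT.
- by case/andP=> _ /eqP ->; rewrite (Tsingle j) in_setU in_set2 eqxx !orbT.
- case/andP=> _ huv; move: hb1 hb2.
  rewrite /z (Tsingle i) (Tsingle j) !(inj_eq inr_inj) !xpair_eqE eqxx /=.
  by move=> hu hv; rewrite in_setU !inE /= huv hu hv.
Qed.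

(* A copy of [F] in [S - z] forces [u0] to be pendant and the copy to be an
   isomorphism; it then exhibits [z] as the connection of another representation. *)
Lemma reroot (g : F -> S) : embedding g -> (forall u, g u != z) ->
  exists (w' : T -> F) (phi : special_graph w' -> S), graph_iso phi /\ phi (inl t0) = z.
Proof.
move=> [ginj ghom] gz.
have hinj : injective (proj \o g).
  by move=> u v /= /proj_inj_off e; apply/ginj/e; rewrite in_setC1.
have [a hua] := exists_adj hc u0 (ltnW hF3).
have [|hw hdeg himg] := pendant_of_arc_injection hinj _
  (fun u v huv => proj_arc (gz u) (gz v) (ghom _ _ huv)).
  by apply/card_gt0P; exists a; rewrite inE.
have nbhd_u0 v : adj u0 v = (v == a).
  have [a' ea'] := cards1P (introT eqP hdeg).
  have ea : a = a' by apply/set1P; rewrite -ea' inE.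
  by move/setP/(_ v): ea'; rewrite !inE ea => ->.
have greflect u v : adj (g u) (g v) -> adj u v.
  move=> /(proj_arc (gz u) (gz v)); rewrite -himg.
  by case/imsetP=> -[u' v'] huv' [/hinj eu /hinj ev]; move: huv'; rewrite inE /= -eu -ev.
have zadj (b : S) : adj z b = (b == inr (t0, a)).
  case: b => [j|[j v]] /=; rewrite (Tsingle j) eqxx /=; first by rewrite eq_sym (negbTE hw).
  by rewrite (inj_eq inr_inj) xpair_eqE eqxx nbhd_u0.
have [w' gw'] : exists w', g w' = inr (t0, a).
  have [ginv _ ginvK] := injF_bij hinj.
  exists (ginv a); move: (ginvK a) => /=; case: (g (ginv a)) => [j | [j v]] /=.
    by move=> eu; rewrite eu adj_irr in hua.
  by move=> ->; rewrite (Tsingle j).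
pose phi (b : special_graph (fun _ : T => w')) : S :=
  if b is inr (_, u) then g u else z.
exists (fun _ => w'), phi; split=> //; split=> [|b1 b2].
  apply: injF_bij => -[i|[i u]] [j|[j v]] /=.
  - by rewrite (Tsingle i) (Tsingle j).
  - by move=> e; move: (gz v); rewrite -e eqxx.
  - by move=> e; move: (gz u); rewrite e eqxx.
  - by move=> /ginj ->; rewrite (Tsingle i) (Tsingle j).
case: b1 b2 => [i|[i u]] [j|[j v]]; rewrite (Tsingle i) (Tsingle j).
- by rewrite /= !adj_irr andbF.
- by rewrite [LHS](zadj (g v)) -gw' (inj_eq ginj) /= eqxx.
- by rewrite adj_sym [LHS](zadj (g u)) -gw' (inj_eq ginj) /= eqxx.
- by rewrite /= eqxx; apply/idP/idP => [/greflect | /ghom].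
Qed.

Lemma iotaF_special_delete_single :
  (forall (w' : T -> F) (phi : special_graph w' -> S), graph_iso phi -> phi (inl t0) != z) ->
  iotaF F (delete z) = 0.
Proof.
move=> hroot; apply/eqP; rewrite -leqn0 -(cards0 (delete z)).
apply: iotaF_le_card; rewrite isolating_delete imset0 cnbhd0 setU0.
apply/has_copy_inducedP => -[g gemb gz].
have [|w' [phi [isophi e]]] := reroot gemb; first by move=> u; rewrite -in_setC1.
by move: (hroot _ _ isophi); rewrite e eqxx.
Qed.

End Reroot.

End DominatingVertex.
End Special.

Lemma min_isolating_plus_edge (F G : sgraph) (a b : F) (f : G -> plus_edge a b) (x : G) :
  graph_iso f -> min_isolating F [set x].
Proof.
move=> [[g fK gK] fadj].
have cardG : #|G| = #|F| := bij_eq_card (Bijective fK gK).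
have hx : isolating F [set x].
  apply: copy_free_of_card; apply: (@leq_ltn_trans #|[set~ x]|).
    apply: subset_leq_card; apply/subsetP => y; rewrite in_setC in_setC1.
    by apply: contraNneq => ->; apply: mem_cnbhd; rewrite set11.
  have : 0 < #|G| by apply/card_gt0P; exists x.
  by rewrite cardsC1 cardG; lia.
split=> //; apply/esym/iotaF_eq_card => // D hD; rewrite cards1 lt0n cards_eq0.
apply: contraTneq hD => ->; rewrite /isolating negbK /minus_cnbhd cnbhd0 setC0.
apply/has_copy_inducedP; exists g => //; split=> [|u v huv]; first exact: can_inj gK.
by rewrite -fadj !gK /= /pe_adj huv.
Qed.

Theorem lemma3p4 (F : sgraph) (m : nat) (G : sgraph) :
  gamma_one F ->
  3 <= #|edges F| ->
  (pure_special m F G \/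
   exists a b : F, [/\ a != b, ~~ adj a b & isomorphic G (plus_edge a b)]) ->
  (forall x : G, exists D : {set G}, min_isolating F D /\ x \in D) /\
  (pure_special m F G ->
   forall x : G,
     (forall (T : sgraph) (w : T -> F) (phi : special_graph w -> G),
        pure_rep m F G T w phi -> forall i : T, phi (inl i) != x) ->
     iotaF F (delete x) + 1 = iotaF F G).
Proof.
move=> [c hc] hk3 hG.
have hF3 : 2 < #|F| by move: (leq_trans hk3 (card_edges_le F)); case: #|F| => [|[|[|n]]].
split=> [x | [T [w [phi rep]]] x hx].
  case: hG => [[T [w [phi [_ [_ isophi]]]]] | [a [b [_ _ [f isof]]]]].
    have [psi _ psiK] := isophi.1.
    exists (phi @: (psi x |: connections_but w (blk (psi x)))); split.
      exact: min_isolating_imset isophi (min_isolating_special hc hF3 _).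
    by rewrite -{1}(psiK x) imset_f ?setU11.
  by exists [set x]; rewrite set11; split=> //; exact: min_isolating_plus_edge isof.
have [Ttree [hm isophi]] := rep; have [Tconn _] := Ttree; have [psi _ psiK] := isophi.1.
have [i [u psix]] : exists i u, psi x = inr (i, u).
  case e: (psi x) => [j | [i u]]; last by exists i, u.
  by move: (hx _ _ _ rep j); rewrite -e psiK eqxx.
have iotaS : iotaF F (special_graph w) = #|T|.
  by rewrite -(min_isolating_special hc hF3 (inl i)).2 card_connections_but.
rewrite -(psiK x) -(iotaF_delete_iso _ _ isophi) -(iotaF_iso _ isophi) iotaS psix.
case: (ltnP 1 #|T|) => hT; first by rewrite (iotaF_special_delete w hc hF3) // addn1 prednK // ltnW.
have Tsingle j : j = i by apply: (fintype_le1P hT).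
rewrite (iotaF_special_delete_single hc hF3 Tsingle) /=; last first.
  move=> w' phi' isophi'; apply: contra (hx T w' (phi \o phi') _ i) => [/eqP e|].
    by rewrite /= e -psix psiK.
  by split=> //; split=> //; exact: graph_iso_comp isophi' isophi.
by apply/esym/eqP; rewrite eqn_leq hT; apply/card_gt0P; exists i.
Qed.
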